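(* Let $p$ be a prime, $n,s,m\ge2$, and $a,b,c,d,e,f\in\mathbb{Z}_p$. Then $T_{RN}$ is invertible over $\mathbb{Z}_p$ if and only if $$ 0\notin\mathbf{R}_{n;c,d}+\mathbf{R}_{s;a,b}+\mathbf{R}_{m;e,f}. $$
   Context: For $k\ge1$ and $t_1,t_2\in\mathbb{Z}_p$, $S_k(t_1,t_2)$ is the $k\times k$ tridiagonal matrix with zeros on the main diagonal, every subdiagonal entry (positions $(i+1,i)$) equal to $t_1$, and every superdiagonal entry (positions $(i,i+1)$) equal to $t_2$. $I_r$ is the $r\times r$ identity and $\otimes$ the Kronecker product. $M_s=I_s\otimes S_n(c,d)+S_s(a,b)\otimes I_n$ and $T_{RN}=I_m\otimes M_s+S_m(f,e)\otimes I_{ns}$. For $j\ge0$, $g_{j;t_1,t_2}(x)=\sum_{i=0}^{\lfloor j/2\rfloor}(-1)^i(t_1t_2)^i\binom{j-i}{i}x^{j-2i}$. $\mathbb{E}$ is the splitting field over $\mathbb{Z}_p$ of $g_{n;c,d},g_{s;a,b},g_{m;e,f}$ reduced mod $p$, and $\mathbf{R}_{j;t_1,t_2}$ is the set of roots in $\mathbb{E}$ of $g_{j;t_1,t_2}$ mod $p$. Minkowski sum: $S_1+S_2+S_3=\{x_1+x_2+x_3:x_i\in S_i\}$. *)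

From HB Require Import structures.
From mathcomp Require Import all_boot all_order all_algebra all_field.
Set Implicit Arguments. Unset Strict Implicit. Unset Printing Implicit Defensive.
Import Order.TTheory GRing.Theory Num.Theory.
Local Open Scope ring_scope.

(* index helpers for the Kronecker product: row i of A (x) B, with
   A : 'M_(m1,n1), B : 'M_(m2,n2), splits as (i %/ m2, i %% m2). *)
Lemma kron_divP (m1 m2 : nat) (i : 'I_(m1 * m2)) : (i %/ m2 < m1)%N.
Proof.
have m2P : (0 < m2)%N.
  by case: m2 i => [|//] [i /=]; rewrite muln0.
by rewrite ltn_divLR // ltn_ord.
Qed.

Lemma kron_modP (m1 m2 : nat) (i : 'I_(m1 * m2)) : (i %% m2 < m2)%N.
Proof.
have m2P : (0 < m2)%N.
  by case: m2 i => [|//] [i /=]; rewrite muln0.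
by rewrite ltn_pmod.
Qed.

Definition kron (R : pzRingType) (m1 n1 m2 n2 : nat)
    (A : 'M[R]_(m1, n1)) (B : 'M[R]_(m2, n2)) : 'M[R]_(m1 * m2, n1 * n2) :=
  \matrix_(i, j)
    (A (Ordinal (kron_divP i)) (Ordinal (kron_divP j)) *
     B (Ordinal (kron_modP i)) (Ordinal (kron_modP j))).

Definition Smx (R : pzRingType) (k : nat) (t1 t2 : R) : 'M[R]_k :=
  \matrix_(i, j) (if i == j.+1 :> nat then t1
                  else if j == i.+1 :> nat then t2 else 0).

Definition Mmx (R : pzRingType) (n s : nat) (a b c d : R) : 'M[R]_(s * n) :=
  kron (1%:M : 'M[R]_s) (Smx n c d) + kron (Smx s a b) (1%:M : 'M[R]_n).

Definition TRN (R : pzRingType) (n s m : nat) (a b c d e f : R)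
    : 'M[R]_(m * (s * n)) :=
  kron (1%:M : 'M[R]_m) (Mmx n s a b c d)
  + kron (Smx m f e) (1%:M : 'M[R]_(s * n)).

Definition gpoly (R : nzRingType) (j : nat) (t1 t2 : R) : {poly R} :=
  \sum_(i < j./2.+1)
     (((-1) ^+ i * (t1 * t2) ^+ i) *+ 'C(j - i, i)) *: 'X^(j - i.*2).

Definition Rset (F : fieldType) (L : fieldExtType F) (j : nat) (t1 t2 : F)
    : pred L :=
  fun x => root (map_poly (in_alg L) (gpoly j t1 t2)) x.

Definition minkowski3 (L : zmodType) (S1 S2 S3 : pred L) (z : L) : Prop :=
  exists x1 x2 x3, [/\ x1 \in S1, x2 \in S2, x3 \in S3 & z = x1 + x2 + x3].

(* Over the splitting field E, T_RN is the Kronecker sum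
   I (x) I (x) A + I (x) B (x) I + C (x) I (x) I of the images A, B, C of
   S_n(c,d), S_s(a,b), S_m(f,e). The tridiagonal determinant recurrence shows
   that their characteristic polynomials are the g's, so they split over E.
   Tensoring eigenvectors of A, B and C gives a kernel vector of T_RN whenever
   the eigenvalues sum to 0. Conversely the three summands commute and each is
   killed by a product of linear factors (Cayley-Hamilton), so the kernel of
   T_RN, being stable under all three, contains a common eigenvector, whose
   three eigenvalues sum to 0. *)

From mathcomp Require Import all_boot all_order all_algebra all_field.
From mathcomp Require Import zify ring mxtens.

Set Implicit Arguments.
Unset Strict Implicit.
Unset Printing Implicit Defensive.

Import GRing.Theory.
Local Open Scope ring_scope.

Definition tridiag (R : pzRingType) k (x l u : R) : 'M[R]_k :=
  \matrix_(i, j) (if i == j :> nat then x else if i == j.+1 :> nat then l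
                  else if j == i.+1 :> nat then u else 0).

(* Laplace expansion along the first row, then along the first column of the
   (1,2)-minor. *)
Lemma det_tridiagSS (R : comNzRingType) k (x l u : R) :
  \det (tridiag k.+2 x l u) =
  x * \det (tridiag k.+1 x l u) - l * u * \det (tridiag k x l u).
Proof.
rewrite (expand_det_row _ ord0) big_ord_recl big_ord_recl big1; last first.
  by move=> j _; rewrite !mxE /= /bump /= mul0r.
rewrite addr0 !mxE /= /cofactor /=.
have -> : row' ord0 (col' ord0 (tridiag k.+2 x l u)) = tridiag k.+1 x l u.
  by apply/matrixP => i j; rewrite !mxE.
rewrite expr0 mul1r; congr (_ + _).
rewrite (expand_det_col _ ord0) big_ord_recl big1; last first.
  by move=> i _; rewrite !mxE /= /bump /= mul0r.
rewrite addr0 !mxE /= /cofactor /=.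
have -> : row' ord0 (col' ord0 (row' ord0 (col' (lift ord0 ord0)
            (tridiag k.+2 x l u)))) = tridiag k x l u.
  by apply/matrixP => i j; rewrite !mxE /= /bump /=.
by rewrite /bump /= expr1 expr0 !mul1r mulN1r mulrN mulrA [u * l]mulrC.
Qed.

Section GPoly.

Variable R : comNzRingType.

Lemma gpoly_widen j (t1 t2 : R) N : (j./2 < N)%N ->
  gpoly j t1 t2 =
  \sum_(i < N) (((-1) ^+ i * (t1 * t2) ^+ i) *+ 'C(j - i, i)) *: 'X^(j - i.*2).
Proof.
move=> ltjN; rewrite /gpoly.
rewrite (big_ord_widen N (fun i => (((-1) ^+ i * (t1 * t2) ^+ i) *+ 'C(j - i, i))
                                  *: 'X^(j - i.*2)) ltjN).
rewrite big_mkcond /=; apply: eq_bigr => i _; case: ifP => // /negbT.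
rewrite -leqNgt => lt_half_i; rewrite bin_small ?mulr0n ?scale0r //.
by have := odd_double_half j; rewrite -!addnn; lia.
Qed.

Lemma gpoly0 (t1 t2 : R) : gpoly 0 t1 t2 = 1.
Proof. by rewrite /gpoly big_ord1 /= expr0 mulr1 mulr1n scale1r expr0. Qed.

Lemma gpoly1 (t1 t2 : R) : gpoly 1 t1 t2 = 'X.
Proof. by rewrite /gpoly big_ord1 /= expr0 mulr1 mulr1n scale1r expr1. Qed.

Lemma gpolyC j (t1 t2 : R) : gpoly j t1 t2 = gpoly j t2 t1.
Proof. by rewrite /gpoly; apply: eq_bigr => i _; rewrite [t1 * t2]mulrC. Qed.

(* Pascal's rule C(k+1-i, i+1) = C(k-i, i+1) + C(k-i, i), coefficientwise. *)
Lemma gpolySS k (t1 t2 : R) :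
  gpoly k.+2 t1 t2 = 'X * gpoly k.+1 t1 t2 - (t1 * t2)%:P * gpoly k t1 t2.
Proof.
have halfk := half_leq (leqnSn k); have halfSk := half_leq (leqnSn k.+1).
rewrite (@gpoly_widen k.+2 _ _ k.+3); last by rewrite ltnS; lia.
rewrite (@gpoly_widen k.+1 _ _ k.+3); last by lia.
rewrite (@gpoly_widen k _ _ k.+2); last by lia.
rewrite big_ord_recl !mulr_sumr [X in _ = X - _]big_ord_recl -addrA -sumrB /=.
congr (_ + _).
  by rewrite !bin0 !expr0 !mulr1 !mulr1n !scale1r !subn0 exprS.
apply: eq_bigr => j _; rewrite /bump add1n; move: (j : nat) => {j} i.
rewrite doubleS !subSS.
rewrite -!mul_polyC !polyCMn !rmorphM !rmorphXn /= !polyCM !polyCN.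
have [lt_ik|gt_ik|<-] := ltngtP i.*2 k.
- have -> : (k.+1 - i = (k - i).+1)%N by lia.
  have -> : 'X^(k - i.*2) = 'X * 'X^(k - (i.*2).+1) :> {poly R}.
    by rewrite -exprS; congr ('X ^+ _); rewrite -addnn in lt_ik *; lia.
  rewrite binS !mulrnDr !exprS; ring.
- rewrite -addnn in gt_ik.
  rewrite (@bin_small (k - i) i.+1) ?(@bin_small (k.+1 - i) i.+1)
          ?(@bin_small (k - i) i) ?mulr0n; first ring; lia.
- rewrite -addnn (@bin_small (i + i - i) i.+1); last by lia.
  have -> : ((i + i).+1 - i = i.+1)%N by lia.
  have -> : (i + i - i = i)%N by lia.
  rewrite !binn subnn !exprS; ring.
Qed.

Lemma char_poly_mx_Smx k (t1 t2 : R) :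
  char_poly_mx (Smx k t1 t2) = tridiag k 'X (- t1%:P) (- t2%:P).
Proof.
apply/matrixP => i j; rewrite !mxE; have [->|neq_ij] := eqVneq i j.
  by rewrite eqxx mulr1n !ltn_eqF // subr0.
have /negbTE -> : (i : nat) != j by [].
rewrite mulr0n sub0r.
by case: ifP => _; [|case: ifP => _]; rewrite ?polyCN ?oppr0.
Qed.

Lemma char_poly_Smx k (t1 t2 : R) : char_poly (Smx k t1 t2) = gpoly k t1 t2.
Proof.
rewrite /char_poly char_poly_mx_Smx.
suff /(_ k)[] : forall k,
    \det (tridiag k 'X (- t1%:P) (- t2%:P)) = gpoly k t1 t2 /\
    \det (tridiag k.+1 'X (- t1%:P) (- t2%:P)) = gpoly k.+1 t1 t2 by [].
elim=> [|k' [IHk' IHk'S]]; first by rewrite gpoly0 gpoly1 det_mx00 det_mx11 mxE.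
by split; last rewrite det_tridiagSS gpolySS IHk' IHk'S mulrNN polyCM.
Qed.

End GPoly.

Section Tensor.

Variable R : comPzRingType.

Lemma kron_tensmx m1 n1 m2 n2 (A : 'M[R]_(m1, n1)) (B : 'M[R]_(m2, n2)) :
  kron A B = A *t B.
Proof.
by apply/matrixP => i j; rewrite !mxE; congr (A _ _ * B _ _); apply: val_inj.
Qed.

Lemma tensmxDr m1 n1 m2 n2 (A : 'M[R]_(m1, n1)) (B B' : 'M[R]_(m2, n2)) :
  A *t (B + B') = A *t B + A *t B'.
Proof. by apply/matrixP => i j; rewrite !mxE mulrDr. Qed.

Lemma tensmxBl m1 n1 m2 n2 (A A' : 'M[R]_(m1, n1)) (B : 'M[R]_(m2, n2)) :
  (A - A') *t B = A *t B - A' *t B.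
Proof. by apply/matrixP => i j; rewrite !mxE mulrBl. Qed.

Lemma tensmxBr m1 n1 m2 n2 (A : 'M[R]_(m1, n1)) (B B' : 'M[R]_(m2, n2)) :
  A *t (B - B') = A *t B - A *t B'.
Proof. by apply/matrixP => i j; rewrite !mxE mulrBr. Qed.

Lemma tensmxZl m1 n1 m2 n2 (c : R) (A : 'M[R]_(m1, n1)) (B : 'M[R]_(m2, n2)) :
  (c *: A) *t B = c *: (A *t B).
Proof. by apply/matrixP => i j; rewrite !mxE mulrA. Qed.

Lemma tensmxZr m1 n1 m2 n2 (c : R) (A : 'M[R]_(m1, n1)) (B : 'M[R]_(m2, n2)) :
  A *t (c *: B) = c *: (A *t B).
Proof. by apply/matrixP => i j; rewrite !mxE mulrCA. Qed.

Lemma tensmx11 n1 n2 : (1%:M : 'M[R]_n1) *t (1%:M : 'M[R]_n2) = 1%:M.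
Proof.
apply/matrixP => i j.
case: (mxtens_indexP i) => i1 i2; case: (mxtens_indexP j) => j1 j2.
rewrite tensmxE !mxE -natrM mulnb; congr ((_ : bool)%:R).
apply/andP/eqP => [[/eqP -> /eqP ->] //|].
by move=> /(can_inj (@mxtens_indexK _ _)) [-> ->]; rewrite !eqxx.
Qed.

Lemma tensmx1s n1 n2 (c : R) : (1%:M : 'M[R]_n1) *t (c%:M : 'M[R]_n2) = c%:M.
Proof. by rewrite -[c%:M]scalemx1 tensmxZr tensmx11 scalemx1. Qed.

Lemma tensmxs1 n1 n2 (c : R) : (c%:M : 'M[R]_n1) *t (1%:M : 'M[R]_n2) = c%:M.
Proof. by rewrite -[c%:M]scalemx1 tensmxZl tensmx11 scalemx1. Qed.

End Tensor.

(* The matrix (X - r_1) ... (X - r_k) for rs = [:: r_1; ...; r_k]; unlike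
   [horner_mx] it does not require a square size of the form n.+1. *)
Definition mx_prod_XsubC (R : pzRingType) n (X : 'M[R]_n) (rs : seq R) :
  'M[R]_n := foldr (fun r M => (X - r%:M) *m M) 1%:M rs.

Section ProdXsubC.

Variable R : comNzRingType.

Lemma mx_prod_XsubC_1tens n1 n2 (Y : 'M[R]_n2) rs :
  mx_prod_XsubC ((1%:M : 'M[R]_n1) *t Y) rs = 1%:M *t mx_prod_XsubC Y rs.
Proof.
elim: rs => [|r rs IHrs] /=; first by rewrite tensmx11.
by rewrite IHrs -(tensmx1s n1 n2 r) -tensmxBr tensmx_mul mul1mx.
Qed.

Lemma mx_prod_XsubC_tens1 n1 n2 (Y : 'M[R]_n1) rs :
  mx_prod_XsubC (Y *t (1%:M : 'M[R]_n2)) rs = mx_prod_XsubC Y rs *t 1%:M.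
Proof.
elim: rs => [|r rs IHrs] /=; first by rewrite tensmx11.
by rewrite IHrs -(tensmxs1 n1 n2 r) -tensmxBl tensmx_mul mul1mx.
Qed.

Lemma horner_mx_prod_XsubC n (A : 'M[R]_n.+1) rs :
  horner_mx A (\prod_(r <- rs) ('X - r%:P)) = mx_prod_XsubC A rs.
Proof.
elim: rs => [|r rs IHrs] /=; first by rewrite big_nil rmorph1.
by rewrite big_cons rmorphM rmorphB /= horner_mx_X horner_mx_C IHrs.
Qed.

Lemma mx_prod_XsubC_char n (A : 'M[R]_n) rs : (0 < n)%N ->
  char_poly A = \prod_(r <- rs) ('X - r%:P) -> mx_prod_XsubC A rs = 0.
Proof.
case: n A => // n A _ charA.
by rewrite -horner_mx_prod_XsubC -charA Cayley_Hamilton.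
Qed.

End ProdXsubC.

Lemma tensmx_neq0 (R : idomainType) m1 n1 m2 n2
    (A : 'M[R]_(m1, n1)) (B : 'M[R]_(m2, n2)) :
  A != 0 -> B != 0 -> A *t B != 0.
Proof.
move=> /matrix0Pn[i [j nzAij]] /matrix0Pn[k [l nzBkl]]; apply/matrix0Pn.
exists (mxtens_index (i, k)), (mxtens_index (j, l)).
by rewrite tensmxE mulf_neq0.
Qed.

Section Eigenspaces.

Variable F : fieldType.

Lemma unitmx_kermx n (A : 'M[F]_n) : (A \in unitmx) = (kermx A == 0).
Proof. by rewrite kermx_eq0 row_free_unit. Qed.

Lemma stablemx_cap m1 m2 n (U : 'M[F]_(m1, n)) (V : 'M[F]_(m2, n)) f :
  stablemx U f -> stablemx V f -> stablemx (U :&: V)%MS f.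
Proof.
move=> sUf sVf; rewrite sub_capmx.
by rewrite (submx_trans (submxMr _ (capmxSl _ _)) sUf)
           (submx_trans (submxMr _ (capmxSr _ _)) sVf).
Qed.

(* If X is killed by (X - r_1) ... (X - r_k), then applying these factors one
   at a time to a nonzero vector of U, the last nonzero vector obtained is an
   eigenvector; it stays in U by stability. *)
Lemma eigenspace_cap_neq0 m n (U : 'M[F]_(m, n)) (X : 'M[F]_n) rs :
  stablemx U X -> mx_prod_XsubC X rs = 0 -> U != 0 ->
  exists2 r, r \in rs & (U :&: eigenspace X r)%MS != 0.
Proof.
move=> sUX Xrs0 /rowV0Pn[v sVU nz_v].
have : v *m mx_prod_XsubC X rs = 0 by rewrite Xrs0 mulmx0.
elim: rs {Xrs0} v sVU nz_v => [|r rs IHrs] v sVU nz_v /=.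
  by rewrite mulmx1 => v0; rewrite v0 eqxx in nz_v.
rewrite mulmxA; have [v_eigen _ | nz_w] := eqVneq (v *m (X - r%:M)) 0.
  exists r; first exact: mem_head.
  by apply/rowV0Pn; exists v; rewrite // sub_capmx sVU; apply/sub_kermxP.
have sUXr : stablemx U (X - r%:M) by rewrite stablemxD ?stablemxN ?stablemxC.
case/(IHrs _ (submx_trans (submxMr _ sVU) sUXr) nz_w) => r' r'rs nz_U'.
by exists r'; rewrite // in_cons r'rs orbT.
Qed.

Lemma kermx_add3_eigen n (X1 X2 X3 : 'M[F]_n) rs1 rs2 rs3 :
  comm_mx X1 X2 -> comm_mx X1 X3 -> comm_mx X2 X3 ->
  mx_prod_XsubC X1 rs1 = 0 -> mx_prod_XsubC X2 rs2 = 0 ->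
  mx_prod_XsubC X3 rs3 = 0 -> kermx (X1 + X2 + X3) != 0 ->
  exists r1 r2 r3, [/\ r1 \in rs1, r2 \in rs2, r3 \in rs3 & r1 + r2 + r3 = 0].
Proof.
set T := X1 + X2 + X3 => c12 c13 c23 X1rs1 X2rs2 X3rs3 nz_kerT.
have stable_kerT X : comm_mx X X1 -> comm_mx X X2 -> comm_mx X X3 ->
    stablemx (kermx T) X.
  move=> c1 c2 c3; apply/comm_mx_stable_ker/comm_mx_sym.
  by apply: comm_mxD => //; apply: comm_mxD.
have [r3 r3rs nz_U3] := eigenspace_cap_neq0
  (stable_kerT _ (comm_mx_sym c13) (comm_mx_sym c23) (comm_mx_refl _))
  X3rs3 nz_kerT.
have [r2 r2rs nz_U2] := eigenspace_cap_neq0 (stablemx_cap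
  (stable_kerT _ (comm_mx_sym c12) (comm_mx_refl _) c23)
  (comm_mx_stable_eigenspace r3 (comm_mx_sym c23))) X2rs2 nz_U3.
have [r1 r1rs nz_U1] := eigenspace_cap_neq0 (stablemx_cap (stablemx_cap
  (stable_kerT _ (comm_mx_refl _) c12 c13)
  (comm_mx_stable_eigenspace r3 (comm_mx_sym c13)))
  (comm_mx_stable_eigenspace r2 (comm_mx_sym c12))) X1rs1 nz_U2.
exists r1, r2, r3; split=> //.
case/rowV0Pn: nz_U1 => v; rewrite !sub_capmx.
move=> /andP[/andP[/andP[vT v3] v2] v1] nz_v.
move/sub_kermxP: vT; rewrite /T !mulmxDr.
rewrite (eigenspaceP v1) (eigenspaceP v2) (eigenspaceP v3) -!scalerDl.
by move=> /eqP; rewrite scaler_eq0 (negbTE nz_v) orbF => /eqP.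
Qed.

End Eigenspaces.

Definition kronsum3 (R : pzRingType) n1 n2 n3
    (A : 'M[R]_n1) (B : 'M[R]_n2) (C : 'M[R]_n3) : 'M[R]_(n3 * (n2 * n1)) :=
  1%:M *t (1%:M *t A) + 1%:M *t (B *t 1%:M) + C *t 1%:M.

Lemma TRN_kronsum3 (R : comNzRingType) n s m (a b c d e f : R) :
  TRN n s m a b c d e f = kronsum3 (Smx n c d) (Smx s a b) (Smx m f e).
Proof. by rewrite /TRN /Mmx !kron_tensmx tensmxDr. Qed.

Lemma map_kronsum3 (R S : comNzRingType) (g : {rmorphism R -> S}) n1 n2 n3
    (A : 'M[R]_n1) (B : 'M[R]_n2) (C : 'M[R]_n3) :
  map_mx g (kronsum3 A B C) =
  kronsum3 (map_mx g A) (map_mx g B) (map_mx g C).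
Proof. by rewrite /kronsum3 !(map_mxD, map_mxT, map_scalar_mx, rmorph1). Qed.

Lemma eq_minkowski3 (L : zmodType) (S1 S2 S3 S1' S2' S3' : pred L) z :
  S1 =i S1' -> S2 =i S2' -> S3 =i S3' ->
  minkowski3 S1 S2 S3 z <-> minkowski3 S1' S2' S3' z.
Proof.
move=> eqS1 eqS2 eqS3.
split=> -[x1 [x2 [x3 [S1x1 S2x2 S3x3 ->]]]]; exists x1, x2, x3.
  by split; rewrite -?eqS1 -?eqS2 -?eqS3.
by split; rewrite ?eqS1 ?eqS2 ?eqS3.
Qed.

Section KronSum3.

Variables (K : fieldType) (n1 n2 n3 : nat).
Variables (A : 'M[K]_n1) (B : 'M[K]_n2) (C : 'M[K]_n3).

Lemma mulmx_kronsum3_tensmx p1 p2 p3 a b c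
    (u : 'M_(p1, n1)) (v : 'M_(p2, n2)) (w : 'M_(p3, n3)) :
  u *m A = a *: u -> v *m B = b *: v -> w *m C = c *: w ->
  (w *t (v *t u)) *m kronsum3 A B C = (a + b + c) *: (w *t (v *t u)).
Proof.
move=> Au Bv Cw; rewrite /kronsum3 !mulmxDr !tensmx_mul !mulmx1 Au Bv Cw.
by rewrite !tensmxZl !tensmxZr -!scalerDl.
Qed.

Lemma kronsum3_eigen_kermx a b c :
  eigenvalue A a -> eigenvalue B b -> eigenvalue C c -> a + b + c = 0 ->
  kermx (kronsum3 A B C) != 0.
Proof.
move=> /eigenvalueP[u Au nz_u] /eigenvalueP[v Bv nz_v] /eigenvalueP[w Cw nz_w].
move=> abc0; apply: contraNneq (tensmx_neq0 nz_w (tensmx_neq0 nz_v nz_u)).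
move=> ker0; rewrite -submx0 -ker0; apply/sub_kermxP.
by rewrite (mulmx_kronsum3_tensmx Au Bv Cw) abc0 scale0r.
Qed.

Lemma kronsum3_kermx_eigen rsA rsB rsC :
  (0 < n1)%N -> (0 < n2)%N -> (0 < n3)%N ->
  char_poly A = \prod_(r <- rsA) ('X - r%:P) ->
  char_poly B = \prod_(r <- rsB) ('X - r%:P) ->
  char_poly C = \prod_(r <- rsC) ('X - r%:P) ->
  kermx (kronsum3 A B C) != 0 ->
  minkowski3 (eigenvalue A) (eigenvalue B) (eigenvalue C) 0.
Proof.
move=> n1_gt0 n2_gt0 n3_gt0 charA charB charC nz_ker.
suff [r1 [r2 [r3 [r1A r2B r3C r123]]]] : exists r1 r2 r3,
    [/\ r1 \in rsA, r2 \in rsB, r3 \in rsC & r1 + r2 + r3 = 0].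
  exists r1, r2, r3; split=> //.
  - by move: r1A; rewrite -root_prod_XsubC -charA -eigenvalue_root_char.
  - by move: r2B; rewrite -root_prod_XsubC -charB -eigenvalue_root_char.
  - by move: r3C; rewrite -root_prod_XsubC -charC -eigenvalue_root_char.
apply: kermx_add3_eigen nz_ker.
1-3: by rewrite /comm_mx !tensmx_mul !mul1mx !mulmx1.
- by rewrite !mx_prod_XsubC_1tens (mx_prod_XsubC_char n1_gt0 charA) !tensmx0.
- rewrite mx_prod_XsubC_1tens mx_prod_XsubC_tens1.
  by rewrite (mx_prod_XsubC_char n2_gt0 charB) tens0mx tensmx0.
- by rewrite mx_prod_XsubC_tens1 (mx_prod_XsubC_char n3_gt0 charC) tens0mx.
Qed.

Lemma kronsum3_unitmxP rsA rsB rsC :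
  (0 < n1)%N -> (0 < n2)%N -> (0 < n3)%N ->
  char_poly A = \prod_(r <- rsA) ('X - r%:P) ->
  char_poly B = \prod_(r <- rsB) ('X - r%:P) ->
  char_poly C = \prod_(r <- rsC) ('X - r%:P) ->
  (kronsum3 A B C \in unitmx) <->
  ~ minkowski3 (eigenvalue A) (eigenvalue B) (eigenvalue C) 0.
Proof.
move=> n1_gt0 n2_gt0 n3_gt0 charA charB charC; rewrite unitmx_kermx.
split=> [/eqP ker0 [a [b [c [Aa Bb Cc abc0]]]] | no_sum0].
  by have := kronsum3_eigen_kermx Aa Bb Cc (esym abc0); rewrite ker0 eqxx.
apply/negPn/negP => nz_ker; apply: no_sum0.
exact: kronsum3_kermx_eigen n1_gt0 n2_gt0 n3_gt0 charA charB charC nz_ker.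
Qed.

End KronSum3.

Lemma monic_dvdp_split (K : fieldType) (q P : {poly K}) rs :
  q \is monic -> q %| P -> P %= \prod_(z <- rs) ('X - z%:P) ->
  exists rs', q = \prod_(z <- rs') ('X - z%:P).
Proof.
move=> q_monic + P_split; rewrite (eqp_dvdr _ P_split).
move=> /dvdp_prod_XsubC[msk q_eqp].
exists (mask msk rs); apply/eqP; rewrite -eqp_monic ?monic_prod_XsubC //.
Qed.

Section SplittingField.

Variables (F : fieldType) (L : fieldExtType F).

Lemma char_poly_map_Smx k (t1 t2 : F) :
  char_poly (map_mx (in_alg L) (Smx k t1 t2)) =
  map_poly (in_alg L) (gpoly k t1 t2).
Proof. by rewrite -map_char_poly char_poly_Smx. Qed.

Lemma Rset_eigenvalue k (t1 t2 : F) :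
  Rset (L:=L) k t1 t2 =i eigenvalue (map_mx (in_alg L) (Smx k t1 t2)).
Proof.
move=> x; rewrite -[x \in eigenvalue _]/(eigenvalue _ x).
by rewrite eigenvalue_root_char char_poly_map_Smx.
Qed.

Lemma RsetC k (t1 t2 : F) : Rset (L:=L) k t1 t2 = Rset k t2 t1.
Proof. by rewrite /Rset gpolyC. Qed.

End SplittingField.

Theorem corollary4p3 (p : nat) (hp : prime p) (n s m : nat)
    (hn : (2 <= n)%N) (hs : (2 <= s)%N) (hm : (2 <= m)%N)
    (a b c d e f : 'F_p)
    (E : fieldExtType 'F_p)
    (hE : splittingFieldFor 1%VS
            (map_poly (in_alg E) (gpoly n c d * gpoly s a b * gpoly m e f))
            fullv) :
  (TRN n s m a b c d e f \in unitmx) <->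
  ~ minkowski3 (Rset (L:=E) n c d) (Rset (L:=E) s a b) (Rset (L:=E) m e f) 0.
Proof.
case: hE => rs split_rs _.
have char_split k (t1 t2 : 'F_p) :
    gpoly k t1 t2 %| gpoly n c d * gpoly s a b * gpoly m e f -> exists rs',
    char_poly (map_mx (in_alg E) (Smx k t1 t2)) = \prod_(z <- rs') ('X - z%:P).
  move=> dvd_g; apply: monic_dvdp_split (char_poly_monic _) _ split_rs.
  by rewrite char_poly_map_Smx dvdp_map.
have [rsA charA] := char_split n c d (dvdp_mulr _ (dvdp_mulr _ (dvdpp _))).
have [rsB charB] := char_split s a b (dvdp_mulr _ (dvdp_mull _ (dvdpp _))).
case: (char_split m f e) => [|rsC charC]; first by rewrite gpolyC dvdp_mull.
rewrite -(map_unitmx (in_alg E)) TRN_kronsum3 map_kronsum3.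
rewrite (kronsum3_unitmxP _ _ _ charA charB charC) //; try exact: ltnW.
rewrite [Rset m e f]RsetC; apply: not_iff_compat.
by apply: eq_minkowski3 => x; rewrite Rset_eigenvalue.
Qed.
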